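(* Let $(x,y,s)\in\mathcal{N}(\theta)$ with $\theta\in\left(0,\ \min\left\{\frac{1}{3\sqrt n},\ \frac{1}{4\|QVV^T\|_F+1}\right\}\right)$, and let $\mu=x^Ts/n$, $\omega=\max_i\{x_i,s_i\}$ and $M=[\,SV+XQV\ \ -XA^T\,]$. Then the condition number of $M$ satisfies $$\kappa_M=\mathcal{O}\left(\frac{\omega^2+\mu\,\sigma_{\max}(Q)}{\mu}\,\kappa_{VAQ}\right),$$ where $\kappa_{VAQ}$ is the condition number of the matrix $\begin{bmatrix}V^T&0\\0&A\end{bmatrix}\begin{bmatrix}I&-Q\\0&I\end{bmatrix}$.
   Context: Given $b\in\mathbb{R}^m$, $c\in\mathbb{R}^n$, $A\in\mathbb{R}^{m\times n}$ with $\mathrm{rank}(A)=m\le n$ and symmetric positive semidefinite $Q\in\mathbb{R}^{n\times n}$ (data of the LCQO problem $\min c^Tx+\frac12x^TQx$ s.t. $Ax=b$, $x\ge0$, with dual constraints $A^Ty+s-Qx=c$, $s\ge0$). Partition $A=[A_B\ \ A_N]$ with $A_B$ a nonsingular $m\times m$ basis and set $V=\begin{bmatrix}A_B^{-1}A_N\\-I\end{bmatrix}\in\mathbb{R}^{n\times(n-m)}$, so $AV=0$. $X=\mathrm{diag}(x)$, $S=\mathrm{diag}(s)$, $e$ is the all-ones vector. $\mathcal{PD}^0=\{(x,y,s): Ax=b,\ A^Ty+s-Qx=c,\ x>0,\ s>0\}$ and $\mathcal{N}(\theta)=\{(x,y,s)\in\mathcal{PD}^0:\|XSe-\mu e\|_2\le\theta\mu\}$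 with $\mu=x^Ts/n$. Condition number means ratio of largest to smallest singular value; $\sigma_{\max}(Q)$ is the largest singular value of $Q$. The $\mathcal{O}$ hides an absolute constant. *)

From HB Require Import structures.
From mathcomp Require Import all_boot all_order all_algebra.
From mathcomp Require Import classical_sets reals.
Set Implicit Arguments. Unset Strict Implicit. Unset Printing Implicit Defensive.
Import Order.TTheory GRing.Theory Num.Theory.
Local Open Scope ring_scope.
Local Open Scope classical_set_scope.

Section Defs.
Variable R : realType.

Definition vnorm (p : nat) (v : 'cV[R]_p) : R :=
  Num.sqrt (\sum_(i < p) v i 0 ^+ 2).

Definition frob (p q : nat) (B : 'M[R]_(p, q)) : R :=
  Num.sqrt (\sum_(i < p) \sum_(j < q) B i j ^+ 2).

Definition sigma_max (p q : nat) (B : 'M[R]_(p, q)) : R :=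
  sup [set r | exists v : 'cV[R]_q, vnorm v = 1 /\ r = vnorm (B *m v)].

(* Smallest singular value, i.e. the min(p,q)-th singular value
   (Courant-Fischer: min over unit vectors of |Bv| if p >= q, of |B^T y| otherwise) *)
Definition sigma_min (p q : nat) (B : 'M[R]_(p, q)) : R :=
  if (q <= p)%N then
    inf [set r | exists v : 'cV[R]_q, vnorm v = 1 /\ r = vnorm (B *m v)]
  else
    inf [set r | exists y : 'cV[R]_p, vnorm y = 1 /\ r = vnorm (B^T *m y)].

Definition cond (p q : nat) (B : 'M[R]_(p, q)) : R := sigma_max B / sigma_min B.

Definition diagv (p : nat) (v : 'cV[R]_p) : 'M[R]_p := diag_mx v^T.

Definition Vmat (m k : nat) (AB : 'M[R]_m) (AN : 'M[R]_(m, k)) : 'M[R]_(m + k, k) :=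
  col_mx (invmx AB *m AN) (- 1%:M).

Definition mu_of (p : nat) (x s : 'cV[R]_p) : R := (x^T *m s) 0 0 / p%:R.

Definition omega_of (p : nat) (x s : 'cV[R]_p) : R :=
  \big[Num.max/0]_(i < p) Num.max (x i 0) (s i 0).

Definition in_PD0 (m p : nat) (A : 'M[R]_(m, p)) (b : 'cV[R]_m) (c : 'cV[R]_p)
  (Q : 'M[R]_p) (x : 'cV[R]_p) (y : 'cV[R]_m) (s : 'cV[R]_p) : Prop :=
  A *m x = b /\ A^T *m y + s - Q *m x = c /\
  (forall i, 0 < x i 0) /\ (forall i, 0 < s i 0).

Definition in_N (m p : nat) (A : 'M[R]_(m, p)) (b : 'cV[R]_m) (c : 'cV[R]_p)
  (Q : 'M[R]_p) (theta : R) (x : 'cV[R]_p) (y : 'cV[R]_m) (s : 'cV[R]_p) : Prop :=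
  in_PD0 A b c Q x y s /\
  vnorm (diagv x *m diagv s *m const_mx 1 - (mu_of x s) *: const_mx 1)
    <= theta * mu_of x s.

End Defs.

From HB Require Import structures.
From mathcomp Require Import all_boot all_order all_algebra.
From mathcomp Require Import classical_sets reals.
From mathcomp Require Import ring lra zify.
Import Order.TTheory GRing.Theory Num.Theory.
Set Implicit Arguments. Unset Strict Implicit. Unset Printing Implicit Defensive.
Local Open Scope ring_scope.
Local Open Scope classical_set_scope.

(* Write u = (u1, u2), z1 = V u1 and z2 = A^T u2 - Q V u1: then M u = S z1 - X z2, and the
   transpose of the VAQ matrix maps u to (z1, z2).  As A V = 0 and Q is positive
   semidefinite, z1^T z2 = - z1^T Q z1 <= 0.  In N(theta) with theta < 1/3 we have
   x_i s_i >= (2/3) mu and 0 < x_i, s_i <= omega, and a coordinatewise estimate, which uses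
   the sign of z1^T z2 for the lower half, gives
     ((2/3) mu / omega) |(z1, z2)| <= |M u| <= 2 omega |(z1, z2)|.
   Comparing extreme singular values yields kappa_M <= 3 (omega^2 / mu) kappa_VAQ. *)

(* Lagrange's identity: the defect in Cauchy-Schwarz is half a sum of squares. *)
Lemma CauchySchwarz_sum (R : realFieldType) (p : nat) (a b : 'I_p -> R) :
  (\sum_i a i * b i) ^+ 2 <= (\sum_i a i ^+ 2) * (\sum_i b i ^+ 2).
Proof.
have lagrange : \sum_i \sum_j (a i * b j - a j * b i) ^+ 2 =
    2 * ((\sum_i a i ^+ 2) * (\sum_i b i ^+ 2) - (\sum_i a i * b i) ^+ 2).
  have expand i j : (a i * b j - a j * b i) ^+ 2 =
      a i ^+ 2 * b j ^+ 2 + b i ^+ 2 * a j ^+ 2 - 2 * (a i * b i) * (a j * b j) by ring.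
  under eq_bigr do under eq_bigr do rewrite expand.
  under eq_bigr do rewrite sumrB big_split /= -!mulr_sumr.
  rewrite sumrB big_split /= -!mulr_suml.
  by rewrite -mulr_sumr; ring.
rewrite -subr_ge0 -(pmulr_rge0 _ (ltr0n _ 2)) -lagrange.
by apply: sumr_ge0 => i _; apply: sumr_ge0 => j _; rewrite sqr_ge0.
Qed.

Lemma subr_sqr_ge0 (R : realFieldType) (x om : R) : 0 <= x -> x <= om -> 0 <= om ^+ 2 - x ^+ 2.
Proof. by move=> x_ge0 x_le; rewrite subr_ge0 ler_pXn2r ?nnegrE // (le_trans x_ge0). Qed.

Lemma sqr_scaled_diff_le (R : realFieldType) (x s z t om : R) :
  0 <= x -> x <= om -> 0 <= s -> s <= om ->
  (s * z - x * t) ^+ 2 <= 2 * om ^+ 2 * (z ^+ 2 + t ^+ 2).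
Proof.
move=> x_ge0 x_le s_ge0 s_le.
have := sqr_ge0 (s * z + x * t).
have := mulr_ge0 (sqr_ge0 z) (subr_sqr_ge0 s_ge0 s_le).
have := mulr_ge0 (sqr_ge0 t) (subr_sqr_ge0 x_ge0 x_le).
lra.
Qed.

(* Multiplied by [x s], the defect is
     om^2 (x s - g) (s z - x t)^2 + g z^2 (om^2 s^2 - x s g) + g t^2 (om^2 x^2 - x s g),
   and [g <= x s] with [x, s <= om] makes each factor nonnegative. *)
Lemma sqr_scaled_diff_ge (R : realFieldType) (x s z t om g : R) :
  0 < x -> x <= om -> 0 < s -> s <= om -> 0 <= g -> g <= x * s ->
  g ^+ 2 * (z ^+ 2 + t ^+ 2) - 2 * om ^+ 2 * g * (z * t) <= om ^+ 2 * (s * z - x * t) ^+ 2.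
Proof.
move=> x_gt0 x_le s_gt0 s_le g_ge0 g_le.
have xs_gt0 : 0 < x * s by rewrite mulr_gt0.
have xsg : 0 <= x * s - g by rewrite subr_ge0.
rewrite -subr_ge0 -(pmulr_rge0 _ xs_gt0).
have := mulr_ge0 (mulr_ge0 (sqr_ge0 om) xsg) (sqr_ge0 (s * z - x * t)).
have := mulr_ge0 (mulr_ge0 g_ge0 (sqr_ge0 (z * s))) (subr_sqr_ge0 (ltW x_gt0) x_le).
have := mulr_ge0 (mulr_ge0 g_ge0 (sqr_ge0 (t * x))) (subr_sqr_ge0 (ltW s_gt0) s_le).
have := mulr_ge0 (mulr_ge0 g_ge0 (sqr_ge0 z)) (mulr_ge0 (ltW xs_gt0) xsg).
have := mulr_ge0 (mulr_ge0 g_ge0 (sqr_ge0 t)) (mulr_ge0 (ltW xs_gt0) xsg).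
lra.
Qed.

Section EuclideanNorm.
Variable R : realType.

Definition sqnorm (p : nat) (v : 'cV[R]_p) : R := \sum_i v i 0 ^+ 2.

Definition dotv (p : nat) (u v : 'cV[R]_p) : R := \sum_i u i 0 * v i 0.

Lemma sqnorm_ge0 (p : nat) (v : 'cV[R]_p) : 0 <= sqnorm v.
Proof. by apply: sumr_ge0 => i _; rewrite sqr_ge0. Qed.

Lemma vnorm_ge0 (p : nat) (v : 'cV[R]_p) : 0 <= vnorm v.
Proof. exact: sqrtr_ge0. Qed.

Lemma sqr_vnorm (p : nat) (v : 'cV[R]_p) : vnorm v ^+ 2 = sqnorm v.
Proof. by rewrite sqr_sqrtr // sqnorm_ge0. Qed.

Lemma sqnorm_col_mx (p q : nat) (v : 'cV[R]_p) (w : 'cV[R]_q) :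
  sqnorm (col_mx v w) = sqnorm v + sqnorm w.
Proof.
rewrite /sqnorm big_split_ord /=.
by congr (_ + _); apply: eq_bigr => i _; rewrite ?col_mxEu ?col_mxEd.
Qed.

Lemma trmx_mul_dotv (p : nat) (u v : 'cV[R]_p) : (u^T *m v) 0 0 = dotv u v.
Proof. by rewrite mxE; apply: eq_bigr => i _; rewrite mxE. Qed.

Lemma vnormZ (p : nat) (c : R) (v : 'cV[R]_p) : vnorm (c *: v) = `|c| * vnorm v.
Proof.
rewrite /vnorm -sqrtr_sqr -sqrtrM ?sqr_ge0 // mulr_sumr.
by congr Num.sqrt; apply: eq_bigr => i _; rewrite mxE exprMn.
Qed.

Lemma vnorm_delta (p : nat) (i : 'I_p) : vnorm (delta_mx i 0 : 'cV[R]_p) = 1.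
Proof.
rewrite /vnorm (bigD1 i) //= big1 ?addr0 ?mxE ?eqxx ?expr1n ?sqrtr1 //.
by move=> j /negPf ji; rewrite mxE ji expr0n.
Qed.

Lemma abs_coord_le_vnorm (p : nat) (v : 'cV[R]_p) (i : 'I_p) : `|v i 0| <= vnorm v.
Proof.
rewrite -sqrtr_sqr ler_sqrt; last exact: sqnorm_ge0.
by rewrite (bigD1 i) //= lerDl; apply: sumr_ge0 => j _; rewrite sqr_ge0.
Qed.

Lemma ler_scaled_vnorm (p q : nat) (v : 'cV[R]_p) (w : 'cV[R]_q) (c d : R) :
  0 <= c -> 0 <= d -> c ^+ 2 * sqnorm v <= d ^+ 2 * sqnorm w -> c * vnorm v <= d * vnorm w.
Proof.
move=> c_ge0 d_ge0 vw; rewrite -(ger0_norm c_ge0) -(ger0_norm d_ge0) -!sqrtr_sqr.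
by rewrite -!sqrtrM ?sqr_ge0 // ler_sqrt // mulr_ge0 ?sqr_ge0 ?sqnorm_ge0.
Qed.

Lemma dotv_le (p : nat) (u v : 'cV[R]_p) : dotv u v <= vnorm u * vnorm v.
Proof.
rewrite -sqrtrM ?sqnorm_ge0 //; apply: le_trans (ler_norm _) _.
by rewrite -sqrtr_sqr ler_sqrt ?mulr_ge0 ?sqnorm_ge0 ?CauchySchwarz_sum.
Qed.

Lemma vnorm_mulmx_le_frob (p q : nat) (B : 'M[R]_(p, q)) (v : 'cV[R]_q) :
  vnorm (B *m v) <= frob B * vnorm v.
Proof.
have B2_ge0 : 0 <= \sum_i \sum_j B i j ^+ 2.
  by apply: sumr_ge0 => i _; apply: sumr_ge0 => j _; rewrite sqr_ge0.
rewrite -sqrtrM // ler_sqrt ?mulr_ge0 ?sqnorm_ge0 // mulr_suml.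
by apply: ler_sum => i _; rewrite mxE CauchySchwarz_sum.
Qed.

End EuclideanNorm.

Section SingularValues.
Variable R : realType.

Definition unit_gains (p q : nat) (B : 'M[R]_(p, q)) : set R :=
  [set r | exists v : 'cV[R]_q, vnorm v = 1 /\ r = vnorm (B *m v)].

Lemma unit_gains_neq0 (p q : nat) (B : 'M[R]_(p, q)) : (0 < q)%N -> unit_gains B !=set0.
Proof.
by case: q B => // q B _; exists (vnorm (B *m delta_mx 0 0)), (delta_mx 0 0); rewrite vnorm_delta.
Qed.

Lemma unit_gains0 (p : nat) (B : 'M[R]_(p, 0)) : unit_gains B = set0.
Proof.
apply/seteqP; split => // r [v [v1 _]].
by move: v1; rewrite /vnorm big_ord0 sqrtr0 => /eqP; rewrite eq_sym oner_eq0.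
Qed.

Lemma unit_gains_lbound (p q : nat) (B : 'M[R]_(p, q)) : lbound (unit_gains B) 0.
Proof. by move=> _ [v [_ ->]]; exact: vnorm_ge0. Qed.

Lemma unit_gains_ubound (p q : nat) (B : 'M[R]_(p, q)) : ubound (unit_gains B) (frob B).
Proof. by move=> _ [v [v1 ->]]; rewrite -[frob B]mulr1 -v1 vnorm_mulmx_le_frob. Qed.

Lemma inf_unit_gains_ge0 (p q : nat) (B : 'M[R]_(p, q)) : 0 <= inf (unit_gains B).
Proof.
case: q B => [|q] B; first by rewrite unit_gains0 inf0.
exact: lb_le_inf (unit_gains_neq0 B _) (@unit_gains_lbound _ _ B).
Qed.

Lemma vnorm_mulmx_le_sigma_max (p q : nat) (B : 'M[R]_(p, q)) (v : 'cV[R]_q) :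
  vnorm (B *m v) <= sigma_max B * vnorm v.
Proof.
have [v0|v_neq0] := eqVneq (vnorm v) 0.
  by have := vnorm_mulmx_le_frob B v; rewrite v0 !mulr0.
have v_gt0 : 0 < vnorm v by rewrite lt_def v_neq0 vnorm_ge0.
rewrite mulrC -ler_pdivrMl //.
have -> : (vnorm v)^-1 * vnorm (B *m v) = vnorm (B *m ((vnorm v)^-1 *: v)).
  by rewrite -scalemxAr vnormZ ger0_norm // invr_ge0 ltW.
apply: ub_le_sup; first by exists (frob B); exact: unit_gains_ubound.
by exists ((vnorm v)^-1 *: v); rewrite vnormZ ger0_norm ?invr_ge0 ?mulVf // ltW.
Qed.

Lemma sigma_max_ge0 (p q : nat) (B : 'M[R]_(p, q)) : 0 <= sigma_max B.
Proof.
case: q B => [|q] B; first by rewrite /sigma_max -/(unit_gains B) unit_gains0 sup0.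
apply: le_trans (vnorm_ge0 (B *m delta_mx 0 0)) _.
by rewrite -[sigma_max B]mulr1 -(vnorm_delta R (0 : 'I_q.+1)) vnorm_mulmx_le_sigma_max.
Qed.

(* |B^T y|^2 = y^T (B B^T y) <= |y| |B (B^T y)| <= |y| sigma_max(B) |B^T y|. *)
Lemma vnorm_trmx_mul_le_sigma_max (p q : nat) (B : 'M[R]_(p, q)) (y : 'cV[R]_p) :
  vnorm (B^T *m y) <= sigma_max B * vnorm y.
Proof.
set w := B^T *m y.
have [w0|w_neq0] := eqVneq (vnorm w) 0.
  by rewrite w0 mulr_ge0 ?sigma_max_ge0 ?vnorm_ge0.
have w_gt0 : 0 < vnorm w by rewrite lt_def w_neq0 vnorm_ge0.
rewrite -(ler_pM2l w_gt0) -expr2 sqr_vnorm.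
have -> : sqnorm w = dotv y (B *m w).
  rewrite -trmx_mul_dotv /w mulmxA -[y^T *m B]trmxK trmx_mul trmxK trmx_mul_dotv.
  by apply: eq_bigr => i _; rewrite expr2.
apply: le_trans (dotv_le _ _) _.
rewrite [_ * vnorm y]mulrC mulrCA ler_wpM2l ?vnorm_ge0 //.
by rewrite mulrC vnorm_mulmx_le_sigma_max.
Qed.

Lemma sigma_min_tall (p q : nat) (B : 'M[R]_(p, q)) :
  (q <= p)%N -> sigma_min B = inf (unit_gains B).
Proof. by move=> qp; rewrite /sigma_min qp. Qed.

Lemma sigma_min_wide (p q : nat) (B : 'M[R]_(p, q)) :
  (p < q)%N -> sigma_min B = inf (unit_gains B^T).
Proof. by move=> pq; rewrite /sigma_min leqNgt pq. Qed.

Lemma sigma_min_ge0 (p q : nat) (B : 'M[R]_(p, q)) : 0 <= sigma_min B.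
Proof. by rewrite /sigma_min; case: ifP => _; exact: inf_unit_gains_ge0. Qed.

Lemma cond_ge0 (p q : nat) (B : 'M[R]_(p, q)) : 0 <= cond B.
Proof. by rewrite divr_ge0 ?sigma_max_ge0 ?sigma_min_ge0. Qed.

(* The smallest singular value of a wide [P] is measured through [P^T], so bounds on
   [|M u|] in terms of [|P^T u|] compare the extreme singular values of M and P. *)
Lemma cond_le_of_gain_bounds (p q r : nat) (M : 'M[R]_(p, q)) (P : 'M[R]_(q, r)) (a b : R) :
  (0 < q)%N -> (q <= p)%N -> (q < r)%N -> 0 < a -> 0 < b ->
  (forall u, a * vnorm (P^T *m u) <= vnorm (M *m u)) ->
  (forall u, vnorm (M *m u) <= b * vnorm (P^T *m u)) ->
  cond M <= b / a * cond P.
Proof.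
move=> q_gt0 qp qr a_gt0 b_gt0 lo hi.
have lbM : has_lbound (unit_gains M) by exists 0; exact: unit_gains_lbound.
have lbP : has_lbound (unit_gains P^T) by exists 0; exact: unit_gains_lbound.
have smax_le : sigma_max M <= b * sigma_max P.
  apply: ge_sup (unit_gains_neq0 M q_gt0) _ => _ [u [u1 ->]].
  apply: le_trans (hi u) _; rewrite ler_pM2l //.
  by rewrite -[sigma_max P]mulr1 -u1 vnorm_trmx_mul_le_sigma_max.
have smin_ge : a * sigma_min P <= sigma_min M.
  rewrite (sigma_min_tall M qp) (sigma_min_wide P qr).
  apply: lb_le_inf (unit_gains_neq0 M q_gt0) _ => _ [u [u1 ->]].
  apply: le_trans (lo u); rewrite ler_pM2l //.
  by apply: ge_inf lbP _ _; exists u.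
have smin_le : sigma_min M / b <= sigma_min P.
  rewrite (sigma_min_tall M qp) (sigma_min_wide P qr).
  apply: lb_le_inf (unit_gains_neq0 P^T q_gt0) _ => _ [u [u1 ->]].
  rewrite ler_pdivrMr // mulrC (le_trans _ (hi u)) //.
  by apply: ge_inf lbM _ _; exists u.
have [sminP0|sminP_neq0] := eqVneq (sigma_min P) 0.
  have sminM0 : sigma_min M = 0.
    apply/eqP; rewrite eq_le sigma_min_ge0 andbT.
    by move: smin_le; rewrite sminP0 ler_pdivrMr // mul0r.
  by rewrite /cond sminM0 sminP0 !invr0 !mulr0.
have sminP_gt0 : 0 < sigma_min P by rewrite lt_def sminP_neq0 sigma_min_ge0.
have sminM_gt0 : 0 < sigma_min M by apply: lt_le_trans smin_ge; rewrite mulr_gt0.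
rewrite /cond ler_pdivrMr //; apply: le_trans smax_le _.
apply: le_trans (ler_wpM2l _ smin_ge).
  by rewrite le_eqVlt; apply/orP; left; apply/eqP; field; rewrite !gt_eqF.
by rewrite mulr_ge0 ?(cond_ge0 P) // divr_ge0 // ltW.
Qed.

End SingularValues.

Section DiagonalScaling.
Variables (R : realType) (n : nat) (x s : 'cV[R]_n) (omega : R).
Hypotheses (x_gt0 : forall i, 0 < x i 0) (s_gt0 : forall i, 0 < s i 0).
Hypotheses (x_le : forall i, x i 0 <= omega) (s_le : forall i, s i 0 <= omega).

Lemma diagv_sub_coord (z1 z2 : 'cV[R]_n) (i : 'I_n) :
  (diagv s *m z1 - diagv x *m z2) i 0 = s i 0 * z1 i 0 - x i 0 * z2 i 0.
Proof. by rewrite /diagv !mul_diag_mx !mxE. Qed.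

Lemma sqnorm_diagv_sub_le (z1 z2 : 'cV[R]_n) :
  sqnorm (diagv s *m z1 - diagv x *m z2) <= 2 * omega ^+ 2 * (sqnorm z1 + sqnorm z2).
Proof.
rewrite /sqnorm -big_split /= mulr_sumr; apply: ler_sum => i _.
rewrite diagv_sub_coord.
exact: sqr_scaled_diff_le (ltW (x_gt0 i)) (x_le i) (ltW (s_gt0 i)) (s_le i).
Qed.

(* The cross term [- 2 omega^2 g (z1^T z2)] of the coordinatewise bound is nonnegative. *)
Lemma sqnorm_diagv_sub_ge (g : R) (z1 z2 : 'cV[R]_n) :
  0 <= g -> (forall i, g <= x i 0 * s i 0) -> dotv z1 z2 <= 0 ->
  g ^+ 2 * (sqnorm z1 + sqnorm z2) <= omega ^+ 2 * sqnorm (diagv s *m z1 - diagv x *m z2).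
Proof.
move=> g_ge0 g_le z12_le0.
apply: (@le_trans _ _ (g ^+ 2 * (sqnorm z1 + sqnorm z2) - 2 * omega ^+ 2 * g * dotv z1 z2)).
  rewrite lerDl oppr_ge0; apply: mulr_ge0_le0 z12_le0.
  by rewrite mulr_ge0 // mulr_ge0 ?sqr_ge0.
rewrite /sqnorm /dotv -big_split /= !mulr_sumr -sumrB; apply: ler_sum => i _.
rewrite diagv_sub_coord.
exact: sqr_scaled_diff_ge (x_gt0 i) (x_le i) (s_gt0 i) (s_le i) g_ge0 (g_le i).
Qed.

End DiagonalScaling.

Section PrimalDualMatrices.
Variables (R : realType) (m k : nat) (AB : 'M[R]_m) (AN : 'M[R]_(m, k)) (Q : 'M[R]_(m + k)).
Hypotheses (AB_unit : AB \in unitmx) (Q_sym : Q^T = Q).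
Hypothesis Q_psd : forall v : 'cV[R]_(m + k), 0 <= (v^T *m Q *m v) 0 0.

Local Notation A := (row_mx AB AN).
Local Notation V := (Vmat AB AN).
Local Notation VAQ := (block_mx V^T 0 0 A *m block_mx 1%:M (- Q) 0 1%:M).
Local Notation newton x s := (row_mx (diagv s *m V + diagv x *m Q *m V) (- (diagv x *m A^T))).

Lemma mulmx_Vmat : A *m V = 0.
Proof. by rewrite /Vmat mul_row_col mulKVmx // mulmxN mulmx1 subrr. Qed.

Lemma trmx_VAQ_mul (u1 : 'cV[R]_k) (u2 : 'cV[R]_m) :
  VAQ^T *m col_mx u1 u2 = col_mx (V *m u1) (A^T *m u2 - Q *m (V *m u1)).
Proof.
rewrite trmx_mul !tr_block_mx !trmxK !trmx0 trmx1 linearN /= Q_sym -mulmxA.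
by rewrite !mul_block_col !mul1mx !mul0mx !addr0 add0r mulNmx addrC.
Qed.

Lemma newton_mul (x s : 'cV[R]_(m + k)) (u1 : 'cV[R]_k) (u2 : 'cV[R]_m) :
  newton x s *m col_mx u1 u2
  = diagv s *m (V *m u1) - diagv x *m (A^T *m u2 - Q *m (V *m u1)).
Proof.
by rewrite mul_row_col mulmxDl mulNmx mulmxBr !mulmxA opprB addrA.
Qed.

(* Since [A V = 0], the cross term reduces to [- (V u1)^T Q (V u1)]. *)
Lemma dotv_Vmat_le0 (u1 : 'cV[R]_k) (u2 : 'cV[R]_m) :
  dotv (V *m u1) (A^T *m u2 - Q *m (V *m u1)) <= 0.
Proof.
rewrite -trmx_mul_dotv mulmxBr !mulmxA -trmx_mul [A *m _]mulmxA mulmx_Vmat.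
rewrite mul0mx trmx0 !mul0mx sub0r.
by rewrite mxE oppr_le0 -mulmxA Q_psd.
Qed.

Variables (x s : 'cV[R]_(m + k)) (omega g : R).
Hypotheses (x_gt0 : forall i, 0 < x i 0) (s_gt0 : forall i, 0 < s i 0).
Hypotheses (x_le : forall i, x i 0 <= omega) (s_le : forall i, s i 0 <= omega).
Hypothesis omega_gt0 : 0 < omega.
Let omega_ge0 : 0 <= omega := ltW omega_gt0.

Lemma newton_gain_le (u : 'cV[R]_(k + m)) :
  vnorm (newton x s *m u) <= 2 * omega * vnorm (VAQ^T *m u).
Proof.
rewrite -(vsubmxK u) newton_mul trmx_VAQ_mul -[vnorm (_ - _)]mul1r.
apply: ler_scaled_vnorm; rewrite ?mulr_ge0 // expr1n mul1r sqnorm_col_mx.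
apply: le_trans (sqnorm_diagv_sub_le x_gt0 s_gt0 x_le s_le _ _) _.
rewrite exprMn ler_wpM2r ?addr_ge0 ?sqnorm_ge0 // ler_wpM2r ?sqr_ge0 //.
by rewrite expr2 ler_peMl // ler1n.
Qed.

Lemma newton_gain_ge (u : 'cV[R]_(k + m)) :
  0 <= g -> (forall i, g <= x i 0 * s i 0) ->
  g * vnorm (VAQ^T *m u) <= omega * vnorm (newton x s *m u).
Proof.
move=> g_ge0 g_le; rewrite -(vsubmxK u) newton_mul trmx_VAQ_mul.
apply: ler_scaled_vnorm => //; rewrite sqnorm_col_mx.
exact: sqnorm_diagv_sub_ge x_gt0 s_gt0 x_le s_le _ _ _ g_ge0 g_le (dotv_Vmat_le0 _ _).
Qed.

Lemma cond_newton_le : (0 < m + k)%N -> 0 < g -> (forall i, g <= x i 0 * s i 0) ->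
  cond (newton x s) <= 2 * omega ^+ 2 / g * cond VAQ.
Proof.
move=> n_gt0 g_gt0 g_le.
have gain_ge u : g / omega * vnorm (VAQ^T *m u) <= vnorm (newton x s *m u).
  by rewrite mulrAC ler_pdivrMr // [_ * omega]mulrC newton_gain_ge // ltW.
have := cond_le_of_gain_bounds _ _ _ _ _ gain_ge newton_gain_le.
have -> : 2 * omega / (g / omega) = 2 * omega ^+ 2 / g by field; rewrite !gt_eqF.
apply; rewrite ?divr_gt0 ?mulr_gt0 //; lia.
Qed.

End PrimalDualMatrices.

Section CentralNeighbourhood.
Variables (R : realType) (p : nat) (x s : 'cV[R]_p).

Lemma mu_of_gt0 : (0 < p)%N -> (forall i, 0 < x i 0) -> (forall i, 0 < s i 0) ->
  0 < mu_of x s.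
Proof.
move=> p_gt0 x_gt0 s_gt0; rewrite /mu_of trmx_mul_dotv divr_gt0 ?ltr0n //.
rewrite /dotv (bigD1 (Ordinal p_gt0)) //= ltr_pwDl ?mulr_gt0 //.
by apply: sumr_ge0 => i _; rewrite mulr_ge0 // ltW.
Qed.

Lemma x_le_omega_of (i : 'I_p) : x i 0 <= omega_of x s.
Proof.
apply: le_trans (le_bigmax _ (fun j => Num.max (x j 0) (s j 0)) i).
by rewrite le_max lexx.
Qed.

Lemma s_le_omega_of (i : 'I_p) : s i 0 <= omega_of x s.
Proof.
apply: le_trans (le_bigmax _ (fun j => Num.max (x j 0) (s j 0)) i).
by rewrite le_max lexx orbT.
Qed.

Lemma in_N_mul_ge (m : nat) (A : 'M[R]_(m, p)) (b : 'cV[R]_m) (c : 'cV[R]_p)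
    (Q : 'M[R]_p) (theta : R) (y : 'cV[R]_m) :
  in_N A b c Q theta x y s -> forall i, (1 - theta) * mu_of x s <= x i 0 * s i 0.
Proof.
move=> [_ near] i; have := le_trans (abs_coord_le_vnorm _ i) near.
rewrite -mulmxA /diagv !mul_diag_mx !mxE !mulr1 ler_norml => /andP[lo _].
lra.
Qed.

Lemma theta_lt_inv_3sqrt (theta : R) :
  0 < theta -> theta < 1 / (3 * Num.sqrt p%:R) -> (0 < p)%N /\ theta < 1 / 3.
Proof.
move=> theta_gt0 theta_lt.
have p_gt0 : (0 < p)%N.
  rewrite lt0n; apply/eqP => p0; move: theta_lt.
  by rewrite p0 sqrtr0 mulr0 invr0 mulr0 ltNge ltW.
split=> //; apply: lt_le_trans theta_lt _.
rewrite !div1r lef_pV2 ?posrE ?mulr_gt0 ?sqrtr_gt0 ?ltr0n // ler_peMr //.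
by rewrite -{1}sqrtr1 ler_sqrt ?ler0n // ler1n.
Qed.

End CentralNeighbourhood.

Theorem lemma3 (R : realType) :
  exists C : R, 0 < C /\
  forall (m k : nat) (AB : 'M[R]_m) (AN : 'M[R]_(m, k))
    (b : 'cV[R]_m) (c : 'cV[R]_(m + k)) (Q : 'M[R]_(m + k))
    (theta : R) (x : 'cV[R]_(m + k)) (y : 'cV[R]_m) (s : 'cV[R]_(m + k)),
  let A : 'M[R]_(m, m + k) := row_mx AB AN in
  let n := (m + k)%N in
  let V := Vmat AB AN in
  AB \in unitmx ->
  \rank A = m ->
  Q^T = Q ->
  (forall v : 'cV[R]_(m + k), 0 <= (v^T *m Q *m v) 0 0) ->
  0 < theta ->
  theta < Num.min (1 / (3 * Num.sqrt n%:R)) (1 / (4 * frob (Q *m V *m V^T) + 1)) ->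
  in_N A b c Q theta x y s ->
  let mu := mu_of x s in
  let omega := omega_of x s in
  let M : 'M[R]_(m + k, k + m) :=
    row_mx (diagv s *m V + diagv x *m Q *m V) (- (diagv x *m A^T)) in
  let VAQ : 'M[R]_(k + m, (m + k) + (m + k)) :=
    block_mx V^T 0 0 A *m block_mx 1%:M (- Q) 0 1%:M in
  cond M <= C * ((omega ^+ 2 + mu * sigma_max Q) / mu) * cond VAQ.
Proof.
exists 3; split => //.
move=> m k AB AN b c Q theta x y s A n V AB_unit _ Q_sym Q_psd theta_gt0 theta_lt near.
cbv zeta; set mu := mu_of x s; set omega := omega_of x s.
have [[_ [_ [x_gt0 s_gt0]]] _] := near.
move: theta_lt; rewrite lt_min => /andP[/(theta_lt_inv_3sqrt theta_gt0)[n_gt0 theta_lt3] _].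
have mu_gt0 : 0 < mu := mu_of_gt0 n_gt0 x_gt0 s_gt0.
have omega_gt0 : 0 < omega := lt_le_trans (x_gt0 (Ordinal n_gt0)) (x_le_omega_of _ _ _).
have g_le i : 2 / 3 * mu <= x i 0 * s i 0.
  by apply: le_trans (in_N_mul_ge near i); rewrite ler_pM2r //; lra.
apply: le_trans (cond_newton_le AN AB_unit Q_sym Q_psd x_gt0 s_gt0 (x_le_omega_of x s)
                   (s_le_omega_of x s) omega_gt0 n_gt0 _ g_le) _.
  lra.
rewrite ler_wpM2r ?cond_ge0 //.
have -> : 2 * omega ^+ 2 / (2 / 3 * mu) = 3 * (omega ^+ 2 / mu) by field; rewrite gt_eqF.
by rewrite ler_pM2l // ler_pM2r ?invr_gt0 // lerDl mulr_ge0 ?sigma_max_ge0 // ltW.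
Qed.
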